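(* Let $G$ be an infinite non-abelian soluble periodic group. Then $G\in\mathfrak{Y}_n$ if and only if $G$ splits as a semidirect product $G=\langle x\rangle\ltimes A$, where $\langle x\rangle$ is a finite $p$-group for some prime $p$, $A$ is an abelian $p'$-group (every element has order coprime to $p$), $x^p$ acts trivially on $A$, and $\partial_x$ has property $\mathbb{I}$.
   Context: $\mathfrak{Y}_n$ denotes the class of all groups $G$ (finite or infinite) such that $N_G(A)=A$ for every non-abelian subgroup $A\le G$. If an element $x$ acts on an abelian group $A$, $\partial_x\colon A\to A$ is the endomorphism $\partial_x(a)=a^{1-x}=a\,(a^x)^{-1}$. We say $\partial_x$ has property $\mathbb{I}$ if for every subgroup $B\le A$ with $\partial_x(B)\le B$ one has $\partial_x(B)=B$. *)

From Stdlib Require Import List.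
From mathcomp Require Import all_boot.
Set Implicit Arguments. Unset Strict Implicit.

Record group := Group {
  carrier :> Type;
  gmul : carrier -> carrier -> carrier;
  ginv : carrier -> carrier;
  gone : carrier;
  gmulA : forall x y z, gmul x (gmul y z) = gmul (gmul x y) z;
  gmul1 : forall x, gmul gone x = x;
  gmulV : forall x, gmul (ginv x) x = gone
}.

Section Defs.
Variable G : group.

Fixpoint gpow (x : G) (n : nat) : G :=
  match n with O => (gone G) | S m => gmul x (gpow x m) end.

Definition gconj (x g : G) : G := gmul (ginv g) (gmul x g).
Definition gcomm (x y : G) : G := gmul (ginv x) (gconj x y).

Definition subgroup (H : G -> Prop) : Prop :=
  H (gone G) /\ (forall x y, H x -> H y -> H (gmul x y)) /\ (forall x, H x -> H (ginv x)).

Definition abelian_set (H : G -> Prop) : Prop :=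
  forall x y, H x -> H y -> gmul x y = gmul y x.

Definition gen (S : G -> Prop) : G -> Prop :=
  fun x => forall K, subgroup K -> (forall y, S y -> K y) -> K x.

Definition cyclic_sub (x : G) : G -> Prop := gen (fun y => y = x).

Definition normalizes (g : G) (H : G -> Prop) : Prop :=
  forall a, H a <-> H (gconj a g).

Definition normal_sub (H : G -> Prop) : Prop :=
  subgroup H /\ forall g, normalizes g H.

Definition finite_set (H : G -> Prop) : Prop :=
  exists l : list G, forall x, H x -> In x l.

Definition infinite_group : Prop := ~ finite_set (fun _ => True).

Definition periodic : Prop := forall g : G, exists n, 0 < n /\ gpow g n = gone G.

Fixpoint derived (n : nat) : G -> Prop :=
  match n with
  | O => fun _ => True
  | S m => gen (fun z => exists a b, derived m a /\ derived m b /\ z = gcomm a b)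
  end.

Definition soluble : Prop := exists n, forall x, derived n x -> x = gone G.

Definition in_Yn : Prop :=
  forall A, subgroup A -> ~ abelian_set A -> forall g, normalizes g A -> A g.

Definition finite_p_sub (p : nat) (H : G -> Prop) : Prop :=
  finite_set H /\ forall h, H h -> exists k, gpow h (p ^ k) = gone G.

Definition p'_sub (p : nat) (H : G -> Prop) : Prop :=
  forall a, H a -> exists n, 0 < n /\ coprime n p /\ gpow a n = gone G.

(* partial_x (a) = a^{1-x} = a (a^x)^{-1} *)
Definition dpartial (x a : G) : G := gmul a (ginv (gconj a x)).

Definition property_I (x : G) (A : G -> Prop) : Prop :=
  forall B, subgroup B -> (forall b, B b -> A b) ->
    (forall b, B b -> B (dpartial x b)) ->
    (forall b, B b -> exists c, B c /\ dpartial x c = b).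

End Defs.

From Stdlib Require Import Classical List.
From mathcomp Require Import all_boot zify.
Set Implicit Arguments. Unset Strict Implicit.

(* Sufficiency: a non-abelian subgroup [H] contains an element [z = x b] with
   [b] in [A]; conjugation by [z] agrees with conjugation by [x] on [A], so
   [H \cap A] is [partial_x]-stable.  If [g = z^j e] (with [e] in [A])
   normalises [H], so does [e], whence [partial_x e] lies in [H]; property I
   for the subgroup [(H \cap A) <e>] writes [e] as [partial_x] of one of its
   elements, so [e] lies in [H], and so does [g].

   Necessity: by [Y_n] a non-abelian subgroup containing [G'] is normal, hence
   equal to [G].  So [G'] is abelian, and it is not central (otherwise the
   finite non-abelian group [<a, b>] generated by two non-commuting elements
   would be [G]).  For [g] not centralising [G'] we get [G = <g> G']; the
   centraliser [C] of [G'] is abelian and contains [g^p] for some prime [p].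
   Let [x] be the [p]-part of [g].  The key consequence of [Y_n] is: if
   [K <= C] is [x]-stable and [partial_x] is not trivial on [K], then every
   [c] in [C] with [partial_x c] in [K] lies in [<x> K].  Since [partial_x] is
   nilpotent on the [p]-elements of [C] (binomial theorem modulo [p]), this
   forces [partial_x^2 = 1] there; as [G] is infinite, [partial_x^2] is not
   trivial on the [p']-part [A] of [C], and then the [p]-part of [C] lies in
   [<x>], [partial_x] is injective on [A], and it has property I. *)

Local Notation "x · y" := (gmul x y) (at level 40, left associativity).
Local Notation inv := ginv.
Local Notation one := (gone _).

Lemma ex_min_nat (P : nat -> Prop) :
  (exists n, P n) -> exists m, P m /\ forall k, P k -> m <= k.
Proof.
move=> [n Pn]; elim: n {-2}n (leqnn n) Pn => [|n IH] k.
  by rewrite leqn0 => /eqP -> P0; exists 0.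
move=> le_kn Pk; case: (classic (exists j, j < k /\ P j)) => [[j [lt_jk Pj]] | none].
  by apply: (IH j) => //; lia.
exists k; split => // j Pj; case: (leqP k j) => // lt_jk; by case: none; exists j.
Qed.

Section GroupLaws.
Variable G : group.
Implicit Types x y z a b g : G.

Lemma mulgA x y z : x · (y · z) = x · y · z. Proof. exact: gmulA. Qed.
Lemma mul1g x : one · x = x. Proof. exact: gmul1. Qed.
Lemma mulVg x : inv x · x = one. Proof. exact: gmulV. Qed.

Lemma mulgV x : x · inv x = one.
Proof.
have idem : (x · inv x) · (x · inv x) = x · inv x.
  by rewrite -mulgA (mulgA (inv x) x) mulVg mul1g.
by rewrite -[LHS]mul1g -(mulVg (x · inv x)) -mulgA idem.
Qed.

Lemma mulg1 x : x · one = x.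
Proof. by rewrite -(mulVg x) mulgA mulgV mul1g. Qed.

Lemma mulKg x y : inv x · (x · y) = y. Proof. by rewrite mulgA mulVg mul1g. Qed.
Lemma mulKVg x y : x · (inv x · y) = y. Proof. by rewrite mulgA mulgV mul1g. Qed.
Lemma mulgK x y : x · y · inv y = x. Proof. by rewrite -mulgA mulgV mulg1. Qed.
Lemma mulgKV x y : x · inv y · y = x. Proof. by rewrite -mulgA mulVg mulg1. Qed.

Lemma mulgI x y z : x · y = x · z -> y = z.
Proof. by move=> e; rewrite -(mulKg x y) e mulKg. Qed.
Lemma mulIg x y z : y · x = z · x -> y = z.
Proof. by move=> e; rewrite -(mulgK y x) e mulgK. Qed.

Lemma invg_uniq x y : x · y = one -> y = inv x.
Proof. by move=> e; apply: (@mulgI x); rewrite e mulgV. Qed.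
Lemma invgK x : inv (inv x) = x.
Proof. by symmetry; apply: invg_uniq; rewrite mulVg. Qed.
Lemma invMg x y : inv (x · y) = inv y · inv x.
Proof. by symmetry; apply: invg_uniq; rewrite mulgA mulgK mulgV. Qed.
Lemma invg1 : inv one = one :> G.
Proof. by symmetry; apply: invg_uniq; rewrite mul1g. Qed.
Lemma invg_eq1 x : inv x = one -> x = one.
Proof. by move=> e; rewrite -(invgK x) e invg1. Qed.
Lemma eq_mulgV1 x y : x · inv y = one -> x = y.
Proof. by move=> e; rewrite -(mulgKV x y) e mul1g. Qed.

Lemma conjgE a g : gconj a g = inv g · (a · g). Proof. by []. Qed.
Lemma conjMg a b g : gconj (a · b) g = gconj a g · gconj b g.
Proof. by rewrite !conjgE !mulgA mulgK -!mulgA. Qed.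
Lemma conj1g g : gconj one g = one.
Proof. by rewrite conjgE mul1g mulVg. Qed.
Lemma conjg1 a : gconj a one = a.
Proof. by rewrite conjgE invg1 mul1g mulg1. Qed.
Lemma conjVg a g : gconj (inv a) g = inv (gconj a g).
Proof. by rewrite !conjgE !invMg invgK mulgA. Qed.
Lemma conjgM a g h : gconj a (g · h) = gconj (gconj a g) h.
Proof. by rewrite !conjgE invMg !mulgA. Qed.
Lemma conjgK a g : gconj (gconj a g) (inv g) = a.
Proof. by rewrite -conjgM mulgV conjg1. Qed.
Lemma conjgKV a g : gconj (gconj a (inv g)) g = a.
Proof. by rewrite -conjgM mulVg conjg1. Qed.
Lemma conjg_fix a g : a · g = g · a -> gconj a g = a.
Proof. by move=> e; rewrite conjgE e mulKg. Qed.
Lemma conjg_fixP a g : gconj a g = a -> a · g = g · a.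
Proof. by rewrite conjgE => e; rewrite -{2}e mulKVg. Qed.
Lemma mulg_conj a g : g · gconj a g = a · g.
Proof. by rewrite conjgE mulKVg. Qed.

Lemma conjg_gcommE a b : gconj a b = a · gcomm a b.
Proof. by rewrite /gcomm mulKVg. Qed.
Lemma conjg_gcomm a b g : gconj (gcomm a b) g = gcomm (gconj a g) (gconj b g).
Proof. by rewrite /gcomm conjMg conjVg -!conjgM mulg_conj. Qed.

Lemma expgS x n : gpow x n.+1 = x · gpow x n. Proof. by []. Qed.
Lemma expg1 x : gpow x 1 = x. Proof. by rewrite expgS mulg1. Qed.
Lemma expgD x m n : gpow x (m + n) = gpow x m · gpow x n.
Proof. by elim: m => [|m IH]; rewrite ?mul1g // addSn !expgS IH mulgA. Qed.
Lemma expgSr x n : gpow x n.+1 = gpow x n · x.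
Proof. by rewrite -addn1 expgD expg1. Qed.
Lemma expgM x m n : gpow x (m * n) = gpow (gpow x m) n.
Proof. by elim: n => [|n IH]; rewrite ?muln0 // mulnS expgD IH expgS. Qed.
Lemma expg1n n : gpow one n = one :> G.
Proof. by elim: n => // n IH; rewrite expgS IH mul1g. Qed.
Lemma expg_comm x m n : gpow x m · gpow x n = gpow x n · gpow x m.
Proof. by rewrite -!expgD addnC. Qed.
Lemma expgVn x n : gpow (inv x) n = inv (gpow x n).
Proof. by elim: n => [|n IH]; rewrite ?invg1 // expgS IH expgSr invMg. Qed.
Lemma conjXg x g n : gconj (gpow x n) g = gpow (gconj x g) n.
Proof. by elim: n => [|n IH]; rewrite ?conj1g // !expgS conjMg IH. Qed.

Lemma expg_mod x N i : gpow x N = one -> gpow x i = gpow x (i %% N).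
Proof. by move=> xN; rewrite {1}(divn_eq i N) expgD mulnC expgM xN expg1n mul1g. Qed.

Lemma expg_coprime1 x n m : 0 < n -> coprime n m ->
  gpow x n = one -> gpow x m = one -> x = one.
Proof.
move=> n_gt0 /(coprimeP _ n_gt0) [[u v] /= bezout] xn xm.
have e : u * n = v * m + 1 by lia.
have : gpow x (u * n) = gpow x (v * m + 1) by rewrite e.
by rewrite expgD expg1 mulnC expgM xn expg1n mulnC expgM xm expg1n mul1g.
Qed.

Definition commute x y := x · y = y · x.

Lemma commuteV x y : commute x y -> commute (inv x) y.
Proof. by move=> e; apply: (@mulgI x); rewrite mulKVg mulgA e mulgK. Qed.
Lemma commuteX x y n : commute x y -> commute (gpow x n) y.
Proof.
move=> e; elim: n => [|n IH]; first by rewrite /commute mul1g mulg1.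
by rewrite /commute expgS -mulgA IH mulgA e -mulgA.
Qed.

Lemma expMgn x y n : commute x y -> gpow (x · y) n = gpow x n · gpow y n.
Proof.
move=> cxy; elim: n => [|n IH]; first by rewrite mul1g.
rewrite !expgS IH -!mulgA; congr (_ · _); rewrite !mulgA; congr (_ · _).
by symmetry; apply: commuteX.
Qed.

Lemma inv_expg N k x : 0 < N -> gpow x N = one ->
  inv (gpow x k) = gpow x ((N - 1) * k).
Proof.
move=> N_gt0 xN; symmetry; apply: invg_uniq.
by rewrite -expgD -{1}(mul1n k) -mulnDl subnKC // expgM xN expg1n.
Qed.

End GroupLaws.

Section SubgroupLaws.
Variables (G : group) (H : G -> Prop).
Hypothesis sH : subgroup H.
Implicit Types x y g : G.

Lemma group1 : H one. Proof. by case: sH. Qed.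
Lemma groupM x y : H x -> H y -> H (x · y).
Proof. by case: sH => _ [mulH _]; apply: mulH. Qed.
Lemma groupV x : H x -> H (inv x).
Proof. by case: sH => _ [_ invH]; apply: invH. Qed.
Lemma groupX x n : H x -> H (gpow x n).
Proof. by move=> Hx; elim: n => [|n IH]; [apply: group1 | apply: groupM]. Qed.
Lemma groupJ x g : H x -> H g -> H (gconj x g).
Proof. by move=> Hx Hg; apply: groupM (groupV Hg) (groupM Hx Hg). Qed.
Lemma groupMl x y : H x -> H (x · y) -> H y.
Proof. by move=> Hx Hxy; rewrite -(mulKg x y); apply: groupM (groupV Hx) Hxy. Qed.
Lemma groupMr x y : H y -> H (x · y) -> H x.
Proof. by move=> Hy Hxy; rewrite -(mulgK x y); apply: groupM Hxy (groupV Hy). Qed.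

End SubgroupLaws.

Section Subgroups.
Variable G : group.
Implicit Types (x y a b c g h : G) (H K S : G -> Prop).

Lemma gen_subgroup S : subgroup (gen S).
Proof.
split; first by move=> K [].
split; first by move=> x y Sx Sy K sK SK; exact (groupM sK (Sx K sK SK) (Sy K sK SK)).
by move=> x Sx K sK SK; exact (groupV sK (Sx K sK SK)).
Qed.
Lemma mem_gen S y : S y -> gen S y.
Proof. by move=> Sy K _; apply. Qed.
Lemma gen_min S K : subgroup K -> (forall y, S y -> K y) -> forall y, gen S y -> K y.
Proof. by move=> sK SK y; apply. Qed.

Lemma normalizesP H g : (forall a, H a -> H (gconj a g)) ->
  (forall a, H a -> H (gconj a (inv g))) -> normalizes g H.
Proof. by move=> fwd bwd a; split=> [/fwd|/bwd]; rewrite ?conjgK. Qed.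
Lemma normalizesJ H g a : normalizes g H -> H a -> H (gconj a g).
Proof. by move=> nH /nH. Qed.
Lemma normalizes_mem H g : subgroup H -> H g -> normalizes g H.
Proof.
move=> sH Hg; apply: normalizesP => a Ha; first exact: (groupJ sH Ha Hg).
exact: (groupJ sH Ha (groupV sH Hg)).
Qed.
Lemma normalizesM H g h : normalizes g H -> normalizes h H -> normalizes (g · h) H.
Proof. by move=> ng nh a; rewrite conjgM; apply: iff_trans (ng a) (nh _). Qed.
Lemma normalizesV H g : normalizes g H -> normalizes (inv g) H.
Proof. by move=> ng a; rewrite -{1}(conjgKV a g) -ng. Qed.

Definition mulset S K : G -> Prop := fun w => exists s k, S s /\ K k /\ w = s · k.
Definition powers x : G -> Prop := fun w => exists n, w = gpow x n.

Lemma finite_sub S K : (forall w, S w -> K w) -> finite_set K -> finite_set S.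
Proof. by move=> SK [l inl]; exists l => w /SK /inl. Qed.

Lemma finite_mulset S K : finite_set S -> finite_set K -> finite_set (mulset S K).
Proof.
move=> [l inl] [l' inl']; exists (flat_map (fun s => map (gmul s) l') l).
move=> _ [s [k [Ss [Kk ->]]]]; apply/in_flat_map; exists s; split; first exact: inl.
by apply: in_map; apply: inl'.
Qed.

Lemma finite_powers x N : 0 < N -> gpow x N = one -> finite_set (powers x).
Proof.
move=> N_gt0 xN; exists (map (gpow x) (List.seq 0 N)) => _ [n ->].
rewrite (expg_mod n xN); apply: in_map; apply/in_seq; have := ltn_pmod n N_gt0; lia.
Qed.

Lemma finite_fibres (f : G -> G) S K :
  finite_set (fun y => exists s, S s /\ y = f s) -> finite_set K ->
  (forall s s', S s -> S s' -> f s = f s' -> K (inv s · s')) -> finite_set S.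
Proof.
move=> [l inl] finK fibre.
have lift l0 : exists l', forall s, S s -> In (f s) l0 ->
    exists2 s', In s' l' & S s' /\ f s' = f s.
  elim: l0 => [|y l0 [l' IH]]; first by exists nil.
  case: (classic (exists s, S s /\ f s = y)) => [[s0 [Ss0 <-]] | none].
    exists (s0 :: l') => s Ss [<- | /(IH _ Ss) [s' l's' ?]]; first by exists s0; [left |].
    by exists s'; [right |].
  by exists l' => s Ss [fsy | /(IH _ Ss)] //; case: none; exists s.
have [l' inl'] := lift l.
apply: (finite_sub (K := mulset (fun s => In s l') K)); last first.
  by apply: finite_mulset finK; exists l'.
move=> s Ss; have [s' l's' [Ss' fs's]] := inl' s Ss (inl _ (ex_intro _ s (conj Ss erefl))).
by exists s', (inv s' · s); split => //; split; [apply: fibre; rewrite ?fs's | rewrite mulKVg].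
Qed.

(* [p] is invertible modulo the order [r] of [y], so [y] is a power of [g ^ p]. *)
Lemma p'_power_commute g y w p r : prime p -> commute (gpow g p) w ->
  powers g y -> 0 < r -> coprime r p -> gpow y r = one -> commute y w.
Proof.
move=> p_pr gpw [t ->] r_gt0 rp yr.
have /(coprimeP _ (prime_gt0 p_pr)) [[u v] /= bezout] : coprime p r by rewrite coprime_sym.
have upE : u * p = v * r + 1 by lia.
have -> : gpow g t = gpow (gpow g t) (u * p).
  by rewrite upE expgD expg1 mulnC expgM yr expg1n mul1g.
by rewrite -expgM mulnA mulnC expgM; apply: commuteX.
Qed.

Section Periodic.
Hypothesis periodicG : periodic G.

Lemma invg_expg x : exists n, inv x = gpow x n.
Proof.
have [N [N_gt0 xN]] := periodicG x; exists N.-1.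
by apply: (@mulgI _ x); rewrite mulgV -expgS prednK.
Qed.

Lemma subgroupP H : H one -> (forall x y, H x -> H y -> H (x · y)) -> subgroup H.
Proof.
move=> H1 mulH; split => //; split => // x Hx.
by have [n ->] := invg_expg x; elim: n => [|n IH] //; apply: mulH.
Qed.

Lemma powers_subgroup x : subgroup (powers x).
Proof.
apply: subgroupP; first by exists 0.
by move=> _ _ [m ->] [n ->]; exists (m + n); rewrite expgD.
Qed.

Lemma cyclic_subP x c : cyclic_sub x c <-> powers x c.
Proof.
split; last by move=> [n ->]; apply: (groupX (gen_subgroup _)); exact: mem_gen.
by move=> cx; apply: (gen_min (powers_subgroup x) _ cx) => _ ->; exists 1; rewrite expg1.
Qed.

Lemma finite_powers_periodic x : finite_set (powers x).
Proof. by have [N [N_gt0 xN]] := periodicG x; apply: finite_powers xN. Qed.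

Lemma mulset_subgroup S K : subgroup S -> subgroup K ->
  (forall s k, S s -> K k -> commute s k) -> subgroup (mulset S K).
Proof.
move=> sS sK cSK; apply: subgroupP.
  by exists one, one; do !split; [exact: (group1 sS) | exact: (group1 sK) | rewrite mulg1].
move=> _ _ [s [k [Ss [Kk ->]]]] [s' [k' [Ss' [Kk' ->]]]].
exists (s · s'), (k · k'); do !split; [exact: (groupM sS) | exact: (groupM sK) |].
by rewrite -!mulgA (mulgA k) -(cSK _ _ Ss' Kk) !mulgA.
Qed.

Lemma mulset_powers_subgroup h K : subgroup K ->
  (forall k, K k -> K (gconj k h)) -> subgroup (mulset (powers h) K).
Proof.
move=> sK hK.
have hKn n k : K k -> K (gconj k (gpow h n)).
  by elim: n k => [|n IH] k Kk; rewrite ?conjg1 // expgSr conjgM; apply/hK/IH.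
apply: subgroupP; first by exists one, one; do !split; [exists 0 | exact: group1 | rewrite mulg1].
move=> _ _ [_ [k [[n ->] [Kk ->]]]] [_ [k' [[m ->] [Kk' ->]]]].
exists (gpow h (n + m)), (gconj k (gpow h m) · k'); split; first by exists (n + m).
split; first exact: (groupM sK (hKn _ _ Kk) Kk').
by rewrite expgD !conjgE -!mulgA mulKVg.
Qed.

Lemma expg_pdecomposition p g : prime p -> exists x y, g = x · y /\
  powers g x /\ powers g y /\ (exists e, gpow x (p ^ e) = one) /\
  (exists r, 0 < r /\ coprime r p /\ gpow y r = one).
Proof.
move=> p_pr; have [N [N_gt0 gN]] := periodicG g.
have NE := partnC p N_gt0; set q := N`_p in NE; set r := N`_p^' in NE.
have /(coprimeP _ (part_gt0 p N)) [[u v] /= bezout] := coprime_partC p N N.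
have uqE : u * q = v * r + 1 by rewrite /q /r; lia.
exists (inv (gpow g (v * r))), (gpow g (u * q)).
split; first by rewrite uqE expgD expg1 mulKg.
split; first by exists ((N - 1) * (v * r)); rewrite (inv_expg _ N_gt0 gN).
split; first by exists (u * q).
split.
  exists (logn p N); rewrite -p_part expgVn -expgM -mulnA (mulnC r) NE.
  by rewrite mulnC expgM gN expg1n invg1.
exists r; split; first exact: part_gt0.
split; first by rewrite coprime_sym prime_coprime // -p'natE //; exact: part_pnat.
by rewrite -expgM -mulnA NE mulnC expgM gN expg1n.
Qed.

End Periodic.

End Subgroups.

(** * The operator [dpartial x] *)

Fixpoint prodg (G : group) (F : nat -> G) n : G :=
  if n is m.+1 then prodg F m · F m else one.

Section Dpartial.
Variables (G : group) (x : G).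
Implicit Types (a b c w : G) (F : nat -> G).
Local Notation dp := (dpartial x).

Lemma dpartial1 : dp one = one.
Proof. by rewrite /dpartial conj1g invg1 mul1g. Qed.
Lemma dpartialJ c : dp (gconj c x) = gconj (dp c) x.
Proof. by rewrite /dpartial conjMg conjVg. Qed.
Lemma conjg_dpartial c : gconj c x = inv (dp c) · c.
Proof. by rewrite /dpartial invMg invgK mulgKV. Qed.
Lemma dpartial_eq1 c : dp c = one <-> gconj c x = c.
Proof. by split=> [/eq_mulgV1 e | e]; [rewrite -e | rewrite /dpartial e mulgV]. Qed.
Lemma dpartial_expg i : dp (gpow x i) = one.
Proof. by apply/dpartial_eq1/conjg_fix; rewrite -expgS expgSr. Qed.

Lemma dpartial_expgSr c i :
  dpartial (gpow x i.+1) c = dpartial (gpow x i) c · gconj (dp c) (gpow x i).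
Proof.
by rewrite /dpartial conjMg conjVg -conjgM -expgS -mulgA mulKg.
Qed.

Lemma conjg_expg_mem K a j : (forall k, K k -> K (gconj k x)) -> K a ->
  K (gconj a (gpow x j)).
Proof. by move=> xK Ka; elim: j => [|j IH]; rewrite ?conjg1 // expgSr conjgM; apply: xK. Qed.

Lemma dpartial_expg_mem K c i : subgroup K -> (forall k, K k -> K (gconj k x)) ->
  K (dp c) -> K (dpartial (gpow x i) c).
Proof.
move=> sK xK Kc; elim: i => [|i IH].
  by rewrite /dpartial conjg1 mulgV; exact: (group1 sK).
by rewrite dpartial_expgSr; apply: (groupM sK IH); exact: (conjg_expg_mem i xK Kc).
Qed.

Lemma conjgE_dpartial c : commute c (gconj c x) -> gconj x c = x · dp c.
Proof.
move=> cc; rewrite /dpartial -(commuteV (esym cc)) !conjgE !invMg invgK !mulgA.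
by rewrite mulgV mul1g.
Qed.

Lemma conjg_expg_dpartial c n : gconj (dp c) x = dp c ->
  gconj c (gpow x n) = gpow (inv (dp c)) n · c.
Proof.
move=> fix_dc; elim: n => [|n IH]; first by rewrite conjg1 mul1g.
by rewrite expgSr conjgM IH conjMg conjXg conjVg fix_dc conjg_dpartial mulgA -expgSr.
Qed.

Lemma dpartial_fix_expg c n : gconj c (gpow x n) = c -> gconj (dp c) x = dp c ->
  gpow (dp c) n = one.
Proof.
move=> fix_c fix_dc; have := conjg_expg_dpartial n fix_dc; rewrite fix_c => e.
by apply: invg_eq1; rewrite -expgVn; apply: (@mulIg _ c); rewrite -e mul1g.
Qed.

Lemma prodg_shift F n : prodg F n.+1 = F 0 · prodg (fun j => F j.+1) n.
Proof.
elim: n => [|n IH]; first by rewrite /= mul1g mulg1.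
by rewrite -[prodg F n.+2]/(prodg F n.+1 · F n.+1) IH -mulgA.
Qed.

Lemma eq_prodg F F' n : (forall j, j < n -> F j = F' j) -> prodg F n = prodg F' n.
Proof. by elim: n => [|n IH] e //=; rewrite IH ?e // => j /ltnW /e. Qed.

Lemma prodg1 F n : (forall j, j < n -> F j = one) -> prodg F n = one.
Proof. by elim: n => [|n IH] e //=; rewrite IH ?e ?mul1g // => j /ltnW /e. Qed.

Lemma prodg_ends F n : 0 < n -> (forall j, 0 < j < n -> F j = one) ->
  prodg F n.+1 = F 0 · F n.
Proof.
case: n => [//|n] _ F1; rewrite -[prodg F n.+2]/(prodg F n.+1 · F n.+1) prodg_shift.
rewrite prodg1 ?mulg1 // => j lt_jn.
by apply: F1; rewrite ltnS.
Qed.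

Section AbelianInvariant.
Variable V : G -> Prop.
Hypotheses (sV : subgroup V) (abV : abelian_set V)
  (xV : forall v, V v -> V (gconj v x)).

Lemma dpartial_mem a : V a -> V (dp a).
Proof. by move=> Va; exact: (groupM sV Va (groupV sV (xV Va))). Qed.

Lemma dpartialM a b : V a -> V b -> dp (a · b) = dp a · dp b.
Proof.
move=> Va Vb; rewrite /dpartial conjMg invMg -!mulgA; congr (a · _).
by rewrite mulgA; apply: abV (dpartial_mem _) (groupV _ (xV _)).
Qed.

Lemma dpartialX a n : V a -> dp (gpow a n) = gpow (dp a) n.
Proof.
move=> Va; elim: n => [|n IH]; first exact: dpartial1.
by rewrite !expgS dpartialM ?IH //; apply: groupX.
Qed.

Lemma dpartialV a : V a -> dp (inv a) = inv (dp a).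
Proof.
by move=> Va; apply: invg_uniq; rewrite -dpartialM ?mulgV ?dpartial1 //; apply: groupV.
Qed.

Definition dpartial_image : G -> Prop := fun k => exists v, V v /\ k = dp v.

Lemma dpartial_image_subgroup : subgroup dpartial_image.
Proof.
split; first by exists one; rewrite dpartial1; split; first exact: group1.
split=> [_ _ [a [Va ->]] [b [Vb ->]] | _ [a [Va ->]]].
  by exists (a · b); rewrite dpartialM //; split; first exact: (groupM sV).
by exists (inv a); rewrite dpartialV //; split; first exact: (groupV sV).
Qed.

Lemma dpartial_image_sub k : dpartial_image k -> V k.
Proof. by move=> [a [Va ->]]; exact: dpartial_mem. Qed.

Lemma dpartial_imageJ k : dpartial_image k -> dpartial_image (gconj k x).
Proof. by move=> [a [Va ->]]; exists (gconj a x); rewrite dpartialJ; split; first exact: xV. Qed.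

Lemma iter_dpartial_mem n a : V a -> V (iter n dp a).
Proof. by move=> Va; elim: n => [|n IH] //=; apply: dpartial_mem. Qed.

Lemma iter_dpartialX n a k : V a -> iter n dp (gpow a k) = gpow (iter n dp a) k.
Proof.
by move=> Va; elim: n => [|n IH] //=; rewrite IH dpartialX //; apply: iter_dpartial_mem.
Qed.

Lemma prodg_mem F n : (forall j, V (F j)) -> V (prodg F n).
Proof. by move=> VF; elim: n => [|n IH] /=; [apply: group1 | apply: groupM]. Qed.

Lemma prodgM F F' n : (forall j, V (F j)) -> (forall j, V (F' j)) ->
  prodg (fun j => F j · F' j) n = prodg F n · prodg F' n.
Proof.
move=> VF VF'; elim: n => [|n IH] /=; first by rewrite mul1g.
rewrite IH -!mulgA; congr (_ · _); rewrite !mulgA; congr (_ · _).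
by apply: abV; [apply: prodg_mem | apply: VF].
Qed.

Lemma dpartial_prodg F n : (forall j, V (F j)) ->
  dp (prodg F n) = prodg (fun j => dp (F j)) n.
Proof.
move=> VF; elim: n => [|n IH] /=; first exact: dpartial1.
by rewrite dpartialM ?IH //; apply: prodg_mem.
Qed.

(* [Q - 1] plays the role of [-1] on elements of exponent [Q]: this is the
   binomial expansion of [(1 - x)^n]. *)
Lemma iter_dpartial_binomial w Q n : 0 < Q -> V w -> gpow w Q = one ->
  iter n dp w =
  prodg (fun j => gpow (gconj w (gpow x j)) ('C(n, j) * (Q - 1) ^ j)) n.+1.
Proof.
move=> Q_gt0 Vw wQ.
have VW j k : V (gpow (gconj w (gpow x j)) k) by exact: (groupX sV _ (conjg_expg_mem j xV Vw)).
have dpW j k : dp (gpow (gconj w (gpow x j)) k) =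
    gpow (gconj w (gpow x j)) k · gpow (gconj w (gpow x j.+1)) ((Q - 1) * k).
  rewrite /dpartial conjXg -conjgM -expgSr (inv_expg _ Q_gt0) //.
  by rewrite -conjXg wQ conj1g.
elim: n => [|n IH]; first by rewrite /= mul1g conjg1 mulg1.
rewrite iterS IH dpartial_prodg // (eq_prodg (F' := fun j =>
    gpow (gconj w (gpow x j)) ('C(n, j) * (Q - 1) ^ j) ·
    gpow (gconj w (gpow x j.+1)) ('C(n, j) * (Q - 1) ^ j.+1))); last first.
  by move=> j _; rewrite dpW mulnCA -expnS.
rewrite prodgM // prodg_shift [in RHS]prodg_shift !bin0 -mulgA; congr (_ · _).
rewrite [in RHS](eq_prodg (F' := fun j =>
    gpow (gconj w (gpow x j.+1)) ('C(n, j.+1) * (Q - 1) ^ j.+1) ·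
    gpow (gconj w (gpow x j.+1)) ('C(n, j) * (Q - 1) ^ j.+1))); last first.
  by move=> j _; rewrite binS mulnDl expgD.
rewrite prodgM //; congr (_ · _).
by rewrite /= bin_small // mul0n mulg1.
Qed.

Section PrimeAction.
Variable p : nat.
Hypotheses (p_pr : prime p) (xpV : forall v, V v -> gconj v (gpow x p) = v).

Lemma iter_dpartial_prime w : V w -> gpow w p = one -> iter p dp w = one.
Proof.
move=> Vw wp; have p_gt0 := prime_gt0 p_pr.
rewrite (iter_dpartial_binomial _ p_gt0 Vw wp) prodg_ends // => [|j /andP [j_gt0 lt_jp]].
  rewrite bin0 binn conjg1 xpV // !mul1n expg1 -expgS -addn1 (expg_mod _ wp).
  by rewrite -modnDml fermat_little // modnDml subnK // modnn.
have /dvdnP [t ->] : p %| 'C(p, j) by apply: prime_dvd_bin => //; rewrite j_gt0.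
by rewrite -mulnA mulnCA expgM -conjXg wp conj1g expg1n.
Qed.

Lemma iter_dpartial_nilpotent s w : V w -> gpow w (p ^ s) = one ->
  iter (p * s) dp w = one.
Proof.
elim: s w => [|s IH] w Vw ws; first by rewrite expn0 expg1 in ws; rewrite muln0.
rewrite mulnSr iterD; apply: IH; first exact: iter_dpartial_mem.
rewrite -iter_dpartialX // iter_dpartial_prime //; first exact: groupX.
by rewrite -expgM -expnSr.
Qed.

End PrimeAction.
End AbelianInvariant.
End Dpartial.

(** * Sufficiency *)

Lemma normal_expg (G : group) (A : G -> Prop) (x a : G) i n : normal_sub A -> A a ->
  exists b, A b /\ gpow (gpow x i · a) n = gpow x (i * n) · b.
Proof.
move=> [sA nA] Aa; elim: n => [|n [b [Ab IH]]].
  by exists one; rewrite muln0 mul1g; split; first exact: group1.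
exists (gconj a (gpow x (i * n)) · b); split; first exact: (groupM sA (normalizesJ (nA _) Aa) Ab).
by rewrite expgS IH mulnS expgD -!mulgA mulKVg.
Qed.


Definition pcyclic_semidirect (G : group) : Prop :=
  exists (x : G) (A : G -> Prop) (p : nat),
    prime p /\ normal_sub A /\
    (forall g : G, exists c a, cyclic_sub x c /\ A a /\ g = c · a) /\
    (forall c, cyclic_sub x c -> A c -> c = one) /\
    finite_p_sub p (cyclic_sub x) /\ abelian_set A /\ p'_sub p A /\
    (forall a, A a -> gconj a (gpow x p) = a) /\ property_I x A.

Section Sufficiency.
Variables (G : group) (x : G) (A : G -> Prop) (p : nat).
Hypotheses (periodicG : periodic G) (p_pr : prime p) (nA : normal_sub A)
  (G_eq_xA : forall g : G, exists c a, cyclic_sub x c /\ A a /\ g = c · a)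
  (x_pgroup : finite_p_sub p (cyclic_sub x)) (abA : abelian_set A)
  (xpA : forall a, A a -> gconj a (gpow x p) = a) (IA : property_I x A).
Local Notation dp := (dpartial x).

Let sA : subgroup A. Proof. by case: nA. Qed.
Let xA a : A a -> A (gconj a x). Proof. by case: nA => _ nxA /(nxA x). Qed.

Let dpA_mem := dpartial_mem sA xA.
Let dpAM := dpartialM sA abA xA.
Let dpAX := dpartialX sA abA xA.

Lemma decompose_xA g : exists i a, A a /\ g = gpow x i · a.
Proof.
have [c [a [/(cyclic_subP periodicG) [i ->] [Aa ->]]]] := G_eq_xA g.
by exists i, a.
Qed.

Lemma commute_xA a j : A a -> p %| j -> commute a (gpow x j).
Proof.
move=> Aa /dvdnP [t ->]; rewrite mulnC expgM.
by apply/esym/commuteX/esym/conjg_fixP; apply: xpA.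
Qed.

Lemma nonabelian_mem_p'coset H : ~ abelian_set H ->
  exists i a, A a /\ H (gpow x i · a) /\ ~~ (p %| i).
Proof.
move=> nabH; apply: NNPP => noH; apply: nabH => h1 h2 H1 H2.
have p_dvd i a : A a -> H (gpow x i · a) -> p %| i.
  by move=> Aa Hia; apply: contra_notT noH => ndvd; exists i, a.
have [i1 [a1 [A1 h1E]]] := decompose_xA h1; have [i2 [a2 [A2 h2E]]] := decompose_xA h2.
have p_i1 : p %| i1 by apply: (p_dvd _ a1); rewrite -?h1E.
have p_i2 : p %| i2 by apply: (p_dvd _ a2); rewrite -?h2E.
rewrite h1E h2E.
have mulE i j a b : A a -> p %| j ->
    gpow x i · a · (gpow x j · b) = gpow x i · gpow x j · (a · b).
  by move=> Aa p_j; rewrite -!mulgA (mulgA a) commute_xA // !mulgA.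
by rewrite !mulE // expg_comm (abA A1 A2).
Qed.

Lemma nonabelian_mem_xcoset H : subgroup H -> ~ abelian_set H ->
  exists b, A b /\ H (x · b).
Proof.
move=> sH /nonabelian_mem_p'coset [i [a [Aa [Hxa ndvd]]]].
have [k x_pk] := proj2 x_pgroup x (mem_gen (erefl x)).
have i_gt0 : 0 < i by case: (i) ndvd; rewrite ?dvdn0.
have : coprime i (p ^ k) by rewrite coprimeXr // coprime_sym prime_coprime.
move=> /(coprimeP _ i_gt0) [[u v] /= bezout].
have uiE : u * i = v * p ^ k + 1 by lia.
have [b [Ab xbE]] := normal_expg x i u nA Aa.
exists b; split => //.
have -> : x · b = gpow (gpow x i · a) u.
  by rewrite xbE mulnC uiE expgD mulnC expgM x_pk expg1n mul1g expg1.
exact: groupX.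
Qed.

Lemma property_I_mem H e : subgroup H -> (forall c, A c -> H c -> H (dp c)) ->
  A e -> H (dp e) -> H e.
Proof.
move=> sH dpH Ae Hde.
pose B w := exists b n, (A b /\ H b) /\ w = b · gpow e n.
have BA w : B w -> A w by move=> [b [n [[Ab _] ->]]]; exact: (groupM sA Ab (groupX sA _ Ae)).
have sB : subgroup B.
  apply: (subgroupP periodicG); first by exists one, 0; rewrite mulg1; split; split; apply: group1.
  move=> _ _ [b1 [n1 [[A1 H1] ->]]] [b2 [n2 [[A2 H2] ->]]].
  exists (b1 · b2), (n1 + n2); split; first by split; apply: groupM.
  by rewrite expgD -!mulgA (mulgA (gpow e n1)) (abA (groupX sA n1 Ae) A2) !mulgA.
have dpB w : B w -> B (dp w).
  move=> Bw; exists (dp w), 0; rewrite mulg1; split => //; split.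
    by apply: dpA_mem; apply: BA.
  case: Bw => b [n [[Ab Hb] ->]]; rewrite dpAM ?dpAX //; last exact: groupX.
  exact: (groupM sH (dpH _ Ab Hb) (groupX sH _ Hde)).
have Be : B e by exists one, 1; rewrite expg1 mul1g; split => //; split; apply: group1.
have [_ [[b [n [[Ab Hb] ->]] <-]]] := IA sB BA dpB Be.
rewrite dpAM ?dpAX //; last exact: (groupX sA).
exact: (groupM sH (dpH _ Ab Hb) (groupX sH _ Hde)).
Qed.

Lemma sufficiency : in_Yn G.
Proof.
move=> H sH nabH g ng.
have [b [Ab Hz]] := nonabelian_mem_xcoset sH nabH.
set z := x · b in Hz.
have conj_z c : A c -> gconj c z = gconj c x.
  by move=> Ac; rewrite conjgM conjg_fix //; apply: abA => //; apply: xA.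
have dpH c : A c -> H c -> H (dp c).
  move=> Ac Hc; rewrite /dpartial -conj_z //.
  exact: (groupM sH Hc (groupV sH (groupJ sH Hc Hz))).
have [j [c [Ac gE]]] := decompose_xA g.
have [bj [Abj zjE]] := normal_expg x 1 j nA Ab; rewrite mul1n expg1 -/z in zjE.
set e := inv bj · c; have Ae : A e by apply: (groupM sA (groupV sA Abj) Ac).
have gE' : g = gpow z j · e by rewrite gE zjE -mulgA mulKVg.
have ne : normalizes e H.
  have -> : e = inv (gpow z j) · g by rewrite gE' mulKg.
  exact: (normalizesM (normalizesV (normalizes_mem sH (groupX sH j Hz))) ng).
rewrite gE'; apply: (groupM sH (groupX sH _ Hz) (property_I_mem sH dpH Ae _)).
have Aez : A (inv (gconj e z)) by rewrite conj_z //; exact: (groupV sA (xA Ae)).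
have -> : dp e = inv z · gconj z e.
  by rewrite /dpartial -conj_z // (abA Ae Aez) !conjgE (invMg (inv z)) (invMg e) invgK !mulgA.
exact: (groupM sH (groupV sH Hz) (normalizesJ ne Hz)).
Qed.

End Sufficiency.

(** * Necessity *)

Lemma in_Yn_central_mem (G : group) (z : G) H : in_Yn G -> (forall h, commute z h) ->
  subgroup H -> ~ abelian_set H -> H z.
Proof. by move=> YG zC sH nabH; apply: YG => // a; rewrite conjg_fix //; exact/esym/zC. Qed.

Section ThreePowers.
Variables (G : group) (a b c : G).
Hypotheses (periodicG : periodic G) (c_central : forall w, commute c w)
  (conj_ba : gconj b a = b · c).

Definition powers3 : G -> Prop :=
  fun w => exists i j k, w = gpow a i · gpow b j · gpow c k.

Let cmove m w : gpow c m · w = w · gpow c m. Proof. exact: commuteX. Qed.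

Lemma conjg_expg_powers3 i j : gconj (gpow b j) (gpow a i) = gpow b j · gpow c (j * i).
Proof.
have bE : gconj b (gpow a i) = b · gpow c i.
  elim: i => [|i IH]; first by rewrite conjg1 mulg1.
  by rewrite expgSr conjgM IH conjMg conj_ba (conjg_fix (cmove i a)) -mulgA -expgS.
by rewrite conjXg bE expMgn -?expgM 1?mulnC //; exact/esym/cmove.
Qed.

Lemma powers3_subgroup : subgroup powers3.
Proof.
apply: (subgroupP periodicG); first by exists 0, 0, 0; rewrite !mul1g.
move=> _ _ [i [j [k ->]]] [i' [j' [k' ->]]].
exists (i + i'), (j + j'), (j * i' + k + k').
have ba : gpow b j · gpow a i' = gpow a i' · gpow b j · gpow c (j * i').
  by rewrite -mulg_conj conjg_expg_powers3 mulgA.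
rewrite -(mulgA _ (gpow c k)) cmove !mulgA -(mulgA (gpow a i) (gpow b j)) ba !mulgA.
rewrite -(mulgA _ (gpow c (j * i')) (gpow b j')) cmove !expgD !mulgA.
by rewrite -(mulgA _ (gpow c k')) (expg_comm c k') !mulgA.
Qed.

Lemma powers3_finite : finite_set powers3.
Proof.
apply: (finite_sub (K := mulset (mulset (powers a) (powers b)) (powers c))).
  move=> _ [i [j [k ->]]]; exists (gpow a i · gpow b j), (gpow c k).
  split; last by split; first exists k.
  by exists (gpow a i), (gpow b j); split; [exists i | split; first exists j].
by apply: finite_mulset; [apply: finite_mulset |]; apply: finite_powers_periodic.
Qed.

End ThreePowers.

Section Necessity.
Variable G : group.
Hypotheses (infG : infinite_group G) (nabG : ~ abelian_set (fun _ : G => True))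
  (solG : soluble G) (periodicG : periodic G) (YG : in_Yn G).
Local Notation G' := (@derived G 1).
Implicit Types (a b c d g h w : G) (H : G -> Prop).

Lemma derived1_subgroup : subgroup G'. Proof. exact: gen_subgroup. Qed.
Lemma mem_derived1 a b : G' (gcomm a b). Proof. by apply: mem_gen; exists a, b. Qed.

Lemma derived1J a g : G' a -> G' (gconj a g).
Proof.
move=> G'a; apply: (gen_min (K := fun a => G' (gconj a g)) _ _ G'a); last first.
  by move=> _ [u [v [_ [_ ->]]]]; rewrite conjg_gcomm; apply: mem_derived1.
split; first by rewrite conj1g; exact: (group1 derived1_subgroup).
split=> [u v G'u G'v | u G'u]; first by rewrite conjMg; exact: (groupM derived1_subgroup).
by rewrite conjVg; exact: (groupV derived1_subgroup).
Qed.

Lemma normalizes_over_derived1 H g : subgroup H -> (forall d, G' d -> H d) ->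
  normalizes g H.
Proof.
move=> sH G'H; apply: normalizesP => a Ha; rewrite conjg_gcommE;
  exact: (groupM sH Ha (G'H _ (mem_derived1 _ _))).
Qed.

Lemma nonabelian_over_derived1_full H g : subgroup H -> (forall d, G' d -> H d) ->
  ~ abelian_set H -> H g.
Proof. by move=> sH G'H nabH; apply: YG => //; apply: normalizes_over_derived1. Qed.

Lemma derived1_abelian : abelian_set G'.
Proof.
apply: NNPP => nabG'.
have G'_full g : G' g by apply: nonabelian_over_derived1_full derived1_subgroup _ nabG'.
have derived_full n g : derived n g.
  elim: n g => [|n IH] g //; move: (G'_full g) => /=.
  apply: gen_min; first exact: gen_subgroup.
  by move=> _ [u [v [_ [_ ->]]]]; apply: mem_gen; exists u, v; split; [|split].
have [n derived_triv] := solG; apply: nabG => a b _ _.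
by rewrite (derived_triv a (derived_full n a)) (derived_triv b (derived_full n b)).
Qed.

Lemma derived1_not_central : exists g d, G' d /\ ~ commute g d.
Proof.
apply: NNPP => G'_central.
have [a [b nab]] : exists a b, ~ commute a b.
  by apply: NNPP => comm; apply: nabG => a b _ _; apply: NNPP => nab; apply: comm; exists a, b.
have central d : G' d -> forall w, commute d w.
  by move=> G'd w; apply: NNPP => ndw; apply: G'_central; exists w, d; split=> // /esym.
have sP := powers3_subgroup periodicG (central _ (mem_derived1 b a)) (conjg_gcommE b a).
have nabP : ~ abelian_set (powers3 a b (gcomm b a)).
  move=> abP; apply: nab; apply: abP.
    by exists 1, 0, 0; rewrite expg1 !mulg1.
  by exists 0, 1, 0; rewrite expg1 mul1g mulg1.
apply: infG; apply: finite_sub (powers3_finite a b (gcomm b a) periodicG) => w _.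
apply: (nonabelian_over_derived1_full w sP _ nabP) => d G'd.
exact: (in_Yn_central_mem YG (central _ G'd) sP nabP).
Qed.

Definition cent_derived1 : G -> Prop := fun c => forall d, G' d -> commute c d.
Local Notation C := cent_derived1.

Lemma C_subgroup : subgroup C.
Proof.
split; first by move=> d _; rewrite /commute mul1g mulg1.
split=> [u v Cu Cv d G'd | u Cu d G'd]; first by rewrite /commute -mulgA Cv // mulgA Cu // -mulgA.
exact: commuteV (Cu _ G'd).
Qed.

Lemma derived1_sub_C d : G' d -> C d.
Proof. by move=> G'd d' G'd'; apply: derived1_abelian. Qed.

Lemma C_J c h : C c -> C (gconj c h).
Proof. exact: normalizesJ (normalizes_over_derived1 h C_subgroup derived1_sub_C). Qed.

Lemma central_C z : (forall w, commute z w) -> C z.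
Proof. by move=> zC d _; apply: zC. Qed.

Section NonCentralElement.
Variables (g d0 : G).
Hypotheses (G'd0 : G' d0) (ngd0 : ~ commute g d0).

Lemma g_notin_C : ~ C g. Proof. by move=> Cg; apply/ngd0/Cg. Qed.

Lemma C_abelian : abelian_set C.
Proof.
apply: NNPP => nabC; apply: g_notin_C.
exact: (nonabelian_over_derived1_full g C_subgroup derived1_sub_C nabC).
Qed.

Lemma powers_derived1_full h : ~ C h -> forall w, mulset (powers h) G' w.
Proof.
move=> nCh w; have sK := mulset_powers_subgroup periodicG derived1_subgroup (derived1J ^~ h).
have G'K d : G' d -> mulset (powers h) G' d.
  by move=> G'd; exists one, d; do !split => //; [exists 0 | rewrite mul1g].
apply: (nonabelian_over_derived1_full w sK G'K) => abK; apply: nCh => d G'd.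
apply: abK (G'K _ G'd); exists h, one.
by do !split; [exists 1; rewrite expg1 | exact: (group1 derived1_subgroup) | rewrite mulg1].
Qed.

(* [p] divides the order [m] of [g] modulo [C]: if [g ^ p] were not in [C],
   then [G = <g ^ p> G'] would give [g] in [<g ^ p> C], so [m] would divide a
   number prime to [p]. *)
Lemma exists_prime_expg_C : exists p, prime p /\ C (gpow g p).
Proof.
have [m [[m_gt0 Cgm] m_min]] :
    exists m, (0 < m /\ C (gpow g m)) /\ forall k, 0 < k /\ C (gpow g k) -> m <= k.
  apply: ex_min_nat; have [N [N_gt0 gN]] := periodicG g.
  by exists N; rewrite gN; split => //; exact: (group1 C_subgroup).
have m_dvd n : C (gpow g n) -> m %| n.
  move=> Cgn; apply: NNPP => /negP ndvd.
  have Cgr : C (gpow g (n %% m)).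
    apply: (groupMl C_subgroup (groupX C_subgroup (n %/ m) Cgm)).
    by rewrite -expgM -expgD mulnC -divn_eq.
  have r_gt0 : 0 < n %% m by rewrite lt0n.
  by have := m_min _ (conj r_gt0 Cgr); rewrite leqNgt ltn_pmod.
have m_gt1 : 1 < m.
  by case: m m_gt0 Cgm {m_min m_dvd} => [|[|m]] // _; rewrite expg1 => /g_notin_C.
exists (pdiv m); split; first exact: pdiv_prime.
apply: NNPP => nCgp; set p := pdiv m in nCgp.
have [_ [d [[n ->] [G'd gE]]]] := powers_derived1_full nCgp g.
have [N [N_gt0 gN]] := periodicG g.
have Cg : C (gpow g ((N - 1) * (p * n) + 1)).
  rewrite expgD expg1 -(inv_expg _ N_gt0 gN) expgM {2}gE mulKg.
  exact: derived1_sub_C.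
have pX : p %| (N - 1) * (p * n) by rewrite dvdn_mull // dvdn_mulr.
have := dvdn_trans (pdiv_dvd m) (m_dvd _ Cg); rewrite -/p (dvdn_addr _ pX) dvdn1 => /eqP p1.
by have := pdiv_prime m_gt1; rewrite -/p p1.
Qed.

Section PrimeStructure.
Variables (p : nat) (x y : G) (e r : nat).
Hypotheses (p_pr : prime p) (Cgp : C (gpow g p)) (gE : g = x · y)
  (xg : powers g x) (yg : powers g y) (xe : gpow x (p ^ e) = one)
  (r_gt0 : 0 < r) (rp : coprime r p) (yr : gpow y r = one).
Local Notation dp := (dpartial x).

Lemma expg_p_central w : commute (gpow g p) w.
Proof.
have [_ [d [[n ->] [G'd ->]]]] := powers_derived1_full g_notin_C w.
by rewrite /commute mulgA (expg_comm g p n) -mulgA (Cgp G'd) mulgA.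
Qed.

Lemma y_central w : commute y w.
Proof. exact: p'_power_commute p_pr (expg_p_central w) yg r_gt0 rp yr. Qed.

Lemma expg_xp_central w : commute (gpow x p) w.
Proof.
by case: xg => s ->; rewrite -expgM mulnC expgM; apply/commuteX/expg_p_central.
Qed.

Let xy : commute x y. Proof. exact/esym/y_central. Qed.

Lemma decompose_xy w : exists n d, G' d /\ w = gpow x n · gpow y n · d.
Proof.
have [_ [d [[n ->] [G'd ->]]]] := powers_derived1_full g_notin_C w.
by exists n, d; rewrite gE (expMgn _ xy).
Qed.

Lemma central_of_commute_x z : C z -> commute z x -> forall w, commute z w.
Proof.
move=> Cz zx w; have [n [d [G'd ->]]] := decompose_xy w.
have zxn := commuteX n (esym zx); have zyn := commuteX n (y_central z).
by rewrite /commute !mulgA -zxn -(mulgA (gpow x n)) -zyn mulgA -(mulgA _ z) (Cz _ G'd) !mulgA.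
Qed.

Let xC c : C c -> C (gconj c x). Proof. exact: C_J. Qed.
Let xpC c : C c -> gconj c (gpow x p) = c.
Proof. by move=> _; apply/conjg_fix/esym/expg_xp_central. Qed.
Let dpC := dpartial_mem C_subgroup xC.
Let dpCM := dpartialM C_subgroup C_abelian xC.
Let dpCV := dpartialV C_subgroup C_abelian xC.

(* The key use of [Y_n]: [c] normalises the non-abelian subgroup
   [<x> K], hence lies in it. *)
Lemma C_mem_xcoset K c : subgroup K -> (forall k, K k -> C k) ->
  (forall k, K k -> K (gconj k x)) -> (exists k, K k /\ dp k <> one) ->
  C c -> K (dp c) -> mulset (powers x) K c.
Proof.
move=> sK KC xK [k0 [Kk0 dk0]] Cc Kc.
have sXK := mulset_powers_subgroup periodicG sK xK.
have conjXK c' : C c' -> K (dp c') -> forall w, mulset (powers x) K w ->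
    mulset (powers x) K (gconj w c').
  move=> Cc' Kc' _ [_ [k [[i ->] [Kk ->]]]].
  exists (gpow x i), (dpartial (gpow x i) c' · k); split; first by exists i.
  split; first exact: (groupM sK (dpartial_expg_mem i sK xK Kc') Kk).
  rewrite conjMg (conjg_fix (C_abelian (KC _ Kk) Cc')) conjgE_dpartial ?mulgA //.
  exact: C_abelian Cc' (C_J _ Cc').
have ncK : normalizes c (mulset (powers x) K).
  apply: normalizesP; first exact: conjXK.
  by apply: conjXK; [exact: (groupV C_subgroup) | rewrite dpCV //; exact: (groupV sK)].
have nabXK : ~ abelian_set (mulset (powers x) K).
  move=> abXK; apply/dk0/dpartial_eq1/conjg_fix/abXK.
    by exists one, k0; do !split; [exists 0 | | rewrite mul1g].
  by exists x, one; do !split; [exists 1; rewrite expg1 | exact: (group1 sK) | rewrite mulg1].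
exact: (YG sXK nabXK ncK).
Qed.

Definition C_pexp s : G -> Prop := fun v => C v /\ gpow v (p ^ s) = one.

Lemma C_pexp_subgroup s : subgroup (C_pexp s).
Proof.
apply: (subgroupP periodicG); first by split; [exact: (group1 C_subgroup) | exact: expg1n].
move=> u v [Cu us] [Cv vs]; split; first exact: (groupM C_subgroup Cu Cv).
by rewrite expMgn ?us ?vs ?mul1g //; exact: C_abelian.
Qed.

Lemma C_pexp_abelian s : abelian_set (C_pexp s).
Proof. by move=> u v [Cu _] [Cv _]; exact: C_abelian. Qed.

Lemma C_pexpJ s v : C_pexp s v -> C_pexp s (gconj v x).
Proof. by case=> Cv vs; split; [exact: xC | rewrite -conjXg vs conj1g]. Qed.

Lemma dpartial_xcoset K w : subgroup K -> (forall k, K k -> C k) ->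
  (forall k, K k -> K (gconj k x)) -> (exists k, K k /\ dp k <> one) ->
  C w -> K (dp w) -> exists k, K k /\ dp w = dp k.
Proof.
move=> sK KC xK Kex Cw Kw.
have [_ [k [[i ->] [Kk wE]]]] := C_mem_xcoset sK KC xK Kex Cw Kw.
have Cxi : C (gpow x i) by apply: (groupMr C_subgroup (KC _ Kk)); rewrite -wE.
by exists k; split => //; rewrite wE dpCM ?dpartial_expg ?mul1g //; exact: KC.
Qed.

(* By [C_mem_xcoset], [dp V = dp (dp V)] for [V := C_pexp s], hence
   [dp V = dp^n V] for all [n]; but [dp] is nilpotent on [V]. *)
Lemma dpartial2_p_element s v : C_pexp s v -> dp (dp v) = one.
Proof.
move=> Vv; apply: NNPP => ndv.
have sV := C_pexp_subgroup s; have abV := @C_pexp_abelian s; have xV := @C_pexpJ s.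
have sK := dpartial_image_subgroup sV abV xV.
have KC k : dpartial_image x (C_pexp s) k -> C k by move/(dpartial_image_sub sV xV) => [].
have step w : C_pexp s w -> exists w', C_pexp s w' /\ dp w = dp (dp w').
  move=> Vw; have [k [[w' [Vw' ->]] ->]] := dpartial_xcoset sK KC (dpartial_imageJ xV)
    (ex_intro _ (dp v) (conj (ex_intro _ v (conj Vv erefl)) ndv)) (proj1 Vw)
    (ex_intro _ w (conj Vw erefl)).
  by exists w'.
have iter_step n w : C_pexp s w -> exists w', C_pexp s w' /\ dp w = iter n.+1 dp w'.
  elim: n w => [|n IH] w Vw; first by exists w.
  have [w1 [Vw1 ->]] := IH w Vw; have [w2 [Vw2 e2]] := step w1 Vw1.
  by exists w2; split => //; rewrite !iterSr e2.
have dpV : C_pexp s (dp v) by exact: (dpartial_mem sV xV).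
have [w [[Cw ws] dvE]] := iter_step (p * s) _ dpV.
apply: ndv; rewrite dvE iterS.
by rewrite (iter_dpartial_nilpotent C_subgroup C_abelian xC p_pr xpC) ?dpartial1.
Qed.

Lemma central_of_dpartial1 c : C c -> dp c = one -> forall w, commute c w.
Proof. by move=> Cc /dpartial_eq1/conjg_fixP; apply: central_of_commute_x. Qed.

(* The kernel of [dp] on [C] is central, so it lies in the finite non-abelian
   group generated by [x] and [d]. *)
Lemma kernel_dpartial_finite d : C d -> dp d <> one -> dp (dp d) = one ->
  finite_set (fun c => C c /\ dp c = one).
Proof.
move=> Cd nd ddd; set z := dp d in nd ddd.
have zV_central w : commute (inv z) w by apply/commuteV/(central_of_dpartial1 (dpC Cd)).
have conj_dx : gconj d x = d · inv z by rewrite conjg_dpartial zV_central.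
have sP := powers3_subgroup periodicG zV_central conj_dx.
have nabP : ~ abelian_set (powers3 x d (inv z)).
  move=> abP; apply/nd/dpartial_eq1/conjg_fix/esym/abP.
    by exists 1, 0, 0; rewrite expg1 !mulg1.
  by exists 0, 1, 0; rewrite expg1 mul1g mulg1.
apply: finite_sub (powers3_finite x d (inv z) periodicG) => c [Cc dc].
exact: (in_Yn_central_mem YG (central_of_dpartial1 Cc dc) sP nabP).
Qed.

Lemma C_finite_of_dpartial2_trivial : (forall c, C c -> dp (dp c) = one) -> finite_set C.
Proof.
move=> dd; have Cd0 := derived1_sub_C G'd0.
have nd0 : dp d0 <> one.
  by move=> /(central_of_dpartial1 Cd0) d0C; apply/ngd0/esym/d0C.
have finK := kernel_dpartial_finite Cd0 nd0 (dd _ Cd0).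
apply: (finite_fibres (f := dp) _ finK) => [|s s' Cs Cs' ss'].
  by apply: finite_sub finK => _ [c [Cc ->]]; split; [exact: dpC | exact: dd].
have CsV := groupV C_subgroup Cs.
by split; [exact: (groupM C_subgroup CsV Cs') | rewrite dpCM // dpCV // ss' mulVg].
Qed.

Lemma exists_dpartial2_nontrivial : exists c, C c /\ dp (dp c) <> one.
Proof.
apply: NNPP => none; apply: infG.
have finC : finite_set C.
  apply: C_finite_of_dpartial2_trivial => c Cc; apply: NNPP => ndc.
  by apply: none; exists c.
apply: finite_sub (finite_mulset (finite_powers_periodic periodicG g) finC) => w _.
have [_ [d [[n ->] [G'd ->]]]] := powers_derived1_full g_notin_C w.
by exists (gpow g n), d; do !split; [exists n | exact: derived1_sub_C].
Qed.

Definition C_p' : G -> Prop :=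
  fun a => C a /\ exists n, 0 < n /\ coprime n p /\ gpow a n = one.

Lemma C_p'_subgroup : subgroup C_p'.
Proof.
apply: (subgroupP periodicG).
  by split; [exact: (group1 C_subgroup) | exists 1; rewrite coprime1n expg1].
move=> u v [Cu [n [n_gt0 [np un]]]] [Cv [m [m_gt0 [mp vm]]]].
split; first exact: (groupM C_subgroup Cu Cv).
exists (n * m); split; first by rewrite muln_gt0 n_gt0.
split; first by rewrite coprimeMl np.
rewrite expMgn; last exact: C_abelian.
by rewrite expgM un expg1n mul1g mulnC expgM vm expg1n.
Qed.

Lemma C_p'_abelian : abelian_set C_p'.
Proof. by move=> u v [Cu _] [Cv _]; exact: C_abelian. Qed.

Lemma C_p'J a h : C_p' a -> C_p' (gconj a h).
Proof.
case=> Ca [n [n_gt0 [np an]]]; split; first exact: C_J.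
by exists n; rewrite -conjXg an conj1g.
Qed.

Lemma C_p'_pexp_trivial a k : C_p' a -> gpow a (p ^ k) = one -> a = one.
Proof.
case=> _ [n [n_gt0 [np an]]] ak; apply: (expg_coprime1 n_gt0 _ an ak).
exact: coprimeXr.
Qed.

Lemma C_p'_expg_x_trivial i : C_p' (gpow x i) -> gpow x i = one.
Proof.
move=> Cxi; apply: (C_p'_pexp_trivial (k := e) Cxi).
by rewrite -expgM mulnC expgM xe expg1n.
Qed.

Lemma C_decomposition c : C c -> exists s a v, C_pexp s v /\ C_p' a /\ c = a · v.
Proof.
move=> Cc; have [v [a [cE [[i vE] [[j aE] [[s vs] [n [n_gt0 [np an]]]]]]]]] :=
  expg_pdecomposition periodicG c p_pr.
rewrite {}vE in cE vs; rewrite {}aE in cE an.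
exists s, (gpow c j), (gpow c i); split; first by split => //; exact: (groupX C_subgroup).
split; first by split; [exact: (groupX C_subgroup) | exists n].
by rewrite {1}cE expg_comm.
Qed.

Lemma C_pexp_mono s t v : s <= t -> C_pexp s v -> C_pexp t v.
Proof.
move=> le_st [Cv vs]; split => //.
by rewrite -(subnKC le_st) expnD expgM vs expg1n.
Qed.

Lemma exists_dpartial2_nontrivial_p' : exists a, C_p' a /\ dp (dp a) <> one.
Proof.
have [c [Cc ndc]] := exists_dpartial2_nontrivial.
have [s [a [v [Vv [Aa cE]]]]] := C_decomposition Cc.
exists a; split => // dda; apply: ndc.
have [Ca _] := Aa; have [Cv _] := Vv.
by rewrite cE (dpCM Ca Cv) (dpCM (dpC Ca) (dpC Cv)) dda (dpartial2_p_element Vv) mulg1.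
Qed.

Lemma C_pexp_xcoset s v : C_pexp s v -> exists i w, C_pexp s w /\ v = gpow x i · dp w.
Proof.
move=> Vv; have [a0 [Aa0 nda0]] := exists_dpartial2_nontrivial_p'.
have sD := dpartial_image_subgroup (C_pexp_subgroup s) (@C_pexp_abelian s) (@C_pexpJ s).
have DC k : dpartial_image x (C_pexp s) k -> C k.
  by move/(dpartial_image_sub (C_pexp_subgroup s) (@C_pexpJ s)) => [].
have sK := mulset_subgroup periodicG sD C_p'_subgroup
  (fun k a Dk Aa => C_abelian (DC _ Dk) (proj1 Aa)).
have KC k : mulset (dpartial_image x (C_pexp s)) C_p' k -> C k.
  by move=> [u [a [Du [[Ca _] ->]]]]; exact: (groupM C_subgroup (DC _ Du) Ca).
have xK k : mulset (dpartial_image x (C_pexp s)) C_p' k ->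
    mulset (dpartial_image x (C_pexp s)) C_p' (gconj k x).
  move=> [u [a [Du [Aa ->]]]]; exists (gconj u x), (gconj a x); rewrite conjMg.
  by split; [exact: (dpartial_imageJ (@C_pexpJ s) Du) | split; [exact: C_p'J |]].
have Kex : exists k, mulset (dpartial_image x (C_pexp s)) C_p' k /\ dp k <> one.
  exists a0; split; last by move=> da0; apply: nda0; rewrite da0 dpartial1.
  exists one, a0; split; last by split; last rewrite mul1g.
  by exists one; rewrite dpartial1; split; first exact: (group1 (C_pexp_subgroup s)).
have Kv : mulset (dpartial_image x (C_pexp s)) C_p' (dp v).
  exists (dp v), one; split; first by exists v.
  by split; [exact: (group1 C_p'_subgroup) | rewrite mulg1].
have [_ [_ [[i ->] [[_ [a [[w [Vw ->]] [Aa ->]]]] vE]]]] := C_mem_xcoset sK KC xK Kex (proj1 Vv) Kv.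
exists i, w; split => //; suff a1 : a = one by rewrite vE a1 mulg1.
have Cdwa : C (dp w · a) := groupM C_subgroup (dpC (proj1 Vw)) (proj1 Aa).
have Cxi : C (gpow x i) by apply: (groupMr C_subgroup Cdwa); rewrite -vE; exact: (proj1 Vv).
have Vxi : C_pexp e (gpow x i) by split => //; rewrite -expgM mulnC expgM xe expg1n.
have Vdw : C_pexp s (dp w) := dpartial_mem (C_pexp_subgroup s) (@C_pexpJ s) Vw.
have aE : a = inv (gpow x i · dp w) · v by rewrite vE (mulgA (gpow x i)) mulKg.
apply: (C_p'_pexp_trivial (k := e + s) Aa); apply: (proj2 (_ : C_pexp (e + s) a)).
have sV := C_pexp_subgroup (e + s); rewrite aE.
apply: (groupM sV); first apply: (groupV sV); first apply: (groupM sV).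
- exact: C_pexp_mono (leq_addr s e) Vxi.
- exact: C_pexp_mono (leq_addl e s) Vdw.
- exact: C_pexp_mono (leq_addl e s) Vv.
Qed.

Lemma C_pexp_powers_x s v : C_pexp s v -> powers x v.
Proof.
move=> Vv; have [i [w [Vw ->]]] := C_pexp_xcoset Vv.
have [j [w' [Vw' wE]]] := C_pexp_xcoset Vw.
have Cdw' := dpC (proj1 Vw').
have Cxj : C (gpow x j) by apply: (groupMr C_subgroup Cdw'); rewrite -wE; exact: (proj1 Vw).
by exists i; rewrite wE (dpCM Cxj Cdw') dpartial_expg (dpartial2_p_element Vw') !mulg1.
Qed.

Lemma C_p'_dpartial2 a : C_p' a -> dp (dp a) = one -> dp a = one.
Proof.
move=> Aa /dpartial_eq1 fix_da; apply: (C_p'_pexp_trivial (k := 1)).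
  exact: (dpartial_mem C_p'_subgroup (@C_p'J ^~ x) Aa).
by rewrite expn1; apply: (dpartial_fix_expg (xpC (proj1 Aa)) fix_da).
Qed.

Lemma C_p'_dpartial_image B b : subgroup B -> (forall b, B b -> C_p' b) ->
  (forall b, B b -> B (gconj b x)) -> (exists b', B b' /\ dp (dp b') <> one) ->
  C_p' b -> dpartial_image x B (dp b) -> dpartial_image x B b.
Proof.
move=> sB BA xB [b' [Bb' ndb']] Ab Kb.
have abB : abelian_set B by move=> u v /BA [Cu _] /BA [Cv _]; exact: C_abelian.
have sK := dpartial_image_subgroup sB abB xB.
have KC k : dpartial_image x B k -> C k by move/(dpartial_image_sub sB xB)/BA => [].
have Kex : exists k, dpartial_image x B k /\ dp k <> one.
  by exists (dp b'); split => //; exists b'.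
have [_ [k [[i ->] [[c [Bc ->]] bE]]]] :=
  C_mem_xcoset sK KC (dpartial_imageJ xB) Kex (proj1 Ab) Kb.
have Adc : C_p' (dp c) := dpartial_mem C_p'_subgroup (@C_p'J ^~ x) (BA _ Bc).
have xi1 : gpow x i = one.
  by apply: C_p'_expg_x_trivial; apply: (groupMr C_p'_subgroup Adc); rewrite -bE.
by exists c; split => //; rewrite bE xi1 mul1g.
Qed.

Lemma dpartial_injective_p' z : C_p' z -> dp z = one -> z = one.
Proof.
move=> Az dz; have [a0 [Aa0 nda0]] := exists_dpartial2_nontrivial_p'.
have Kz : dpartial_image x C_p' (dp z).
  by exists one; rewrite dz dpartial1; split; first exact: (group1 C_p'_subgroup).
have [a [Aa zE]] := C_p'_dpartial_image C_p'_subgroup (fun _ Ab => Ab)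
  (@C_p'J ^~ x) (ex_intro _ a0 (conj Aa0 nda0)) Az Kz.
by rewrite zE C_p'_dpartial2 // -zE.
Qed.

Lemma property_I_C_p' : property_I x C_p'.
Proof.
move=> B sB BA dpB b Bb.
have xB b' : B b' -> B (gconj b' x).
  by move=> Bb'; rewrite conjg_dpartial; exact: (groupM sB (groupV sB (dpB _ Bb')) Bb').
case: (classic (exists b', B b' /\ dp (dp b') <> one)) => [Bex | none].
  have [c [Bc bE]] := C_p'_dpartial_image sB BA xB Bex (BA _ Bb) (ex_intro _ b (conj Bb erefl)).
  by exists c.
have db1 : dp b = one.
  by apply: C_p'_dpartial2 (BA _ Bb) _; apply: NNPP => ndb; apply: none; exists b.
exists one; split; first exact: (group1 sB).
by rewrite dpartial1 (dpartial_injective_p' (BA _ Bb) db1).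
Qed.

Lemma semidirect_structure : pcyclic_semidirect G.
Proof.
have cyclicE := cyclic_subP periodicG x.
exists x, C_p', p; split=> //.
split; first by split; [exact: C_p'_subgroup | move=> h; apply: normalizesP => a; exact: C_p'J].
split.
  move=> w; have [n [d [G'd ->]]] := decompose_xy w.
  have [s [a [v [Vv [Aa dE]]]]] := C_decomposition (derived1_sub_C G'd).
  have [j vE] := C_pexp_powers_x Vv.
  have Ay : C_p' (gpow y n).
    split; first exact/central_C/(fun w => commuteX n (y_central w)).
    by exists r; rewrite -expgM mulnC expgM yr expg1n.
  exists (gpow x (n + j)), (gpow y n · a); split; first by apply/cyclicE; exists (n + j).
  split; first exact: (groupM C_p'_subgroup Ay Aa).
  have Cxj : C (gpow x j) by rewrite -vE; exact: (proj1 Vv).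
  rewrite dE vE (C_abelian (proj1 Aa) Cxj) expgD !mulgA -(mulgA (gpow x n) (gpow y n)).
  by rewrite (commuteX n (y_central (gpow x j))) !mulgA.
split; first by move=> c /cyclicE [i ->]; exact: C_p'_expg_x_trivial.
split.
  split; last by move=> c /cyclicE [i ->]; exists e; rewrite -expgM mulnC expgM xe expg1n.
  have pe_gt0 : 0 < p ^ e by rewrite expn_gt0 prime_gt0.
  by apply: (finite_sub _ (finite_powers pe_gt0 xe)) => c /cyclicE.
split; first exact: C_p'_abelian.
split; first by move=> a [].
split; first by move=> a [Ca _]; exact: xpC.
exact: property_I_C_p'.
Qed.

End PrimeStructure.
End NonCentralElement.

Lemma necessity : pcyclic_semidirect G.
Proof.
have [g [d0 [G'd0 ngd0]]] := derived1_not_central.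
have [p [p_pr Cgp]] := exists_prime_expg_C G'd0 ngd0.
have [x [y [gE [xg [yg [[e xe] [r [r_gt0 [rp yr]]]]]]]]] :=
  expg_pdecomposition periodicG g p_pr.
exact: (semidirect_structure G'd0 ngd0 p_pr Cgp gE xg yg xe r_gt0 rp yr).
Qed.

End Necessity.

Theorem theorem3p3 (G : group) :
  infinite_group G -> ~ abelian_set (fun _ : G => True) ->
  soluble G -> periodic G ->
  (in_Yn G <->
   exists (x : G) (A : G -> Prop) (p : nat),
     prime p /\
     (* semidirect product G = <x> |x A *)
     normal_sub A /\
     (forall g : G, exists c a, cyclic_sub x c /\ A a /\ g = gmul c a) /\
     (forall c, cyclic_sub x c -> A c -> c = gone G) /\
     finite_p_sub p (cyclic_sub x) /\
     abelian_set A /\ p'_sub p A /\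
     (forall a, A a -> gconj a (gpow x p) = a) /\
     property_I x A).
Proof.
move=> infG nabG solG periodicG; split=> [YG | ]; first exact: necessity.
move=> [x [A [p [p_pr [nA [G_eq_xA [_ [x_pgroup [abA [_ [xpA IA]]]]]]]]]]].
exact: (sufficiency periodicG p_pr nA G_eq_xA x_pgroup abA xpA IA).
Qed.
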